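(* Let $L$ be the adjoint module of $gl(1|1)$. For every $n\ge1$, the space of invariant tensors $\mathrm{Inv}(L^{\otimes n})=\{v\in L^{\otimes n}: g v=0\ \text{for all } g\in gl(1|1)\}$ has dimension $\binom{2n-2}{n-1}$.
   Context: $gl(1|1)$ is the Lie superalgebra with basis $H,G$ (even), $Q_+,Q_-$ (odd), nonzero supercommutators $[G,Q_\pm]=\pm Q_\pm$, $[Q_+,Q_-]=H$. It acts on $L^{\otimes n}$ (where $L=gl(1|1)$ with the adjoint action) by the super Leibniz rule with Koszul signs. *)

From HB Require Import structures.
From mathcomp Require Import all_boot all_order all_algebra algC.
Set Implicit Arguments. Unset Strict Implicit. Unset Printing Implicit Defensive.
Import Order.TTheory GRing.Theory Num.Theory.
Local Open Scope ring_scope.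

(* Basis of L = gl(1|1): index 0 = H, 1 = G (even), 2 = Q+, 3 = Q- (odd). *)
Definition gl11_odd (a : 'I_4) : bool := (1 < a)%N.

(* Structure constants: [e_a, e_b] = \sum_c gl11_br a b c * e_c (supercommutator). *)
Definition gl11_brZ (a b c : nat) : int :=
  match a, b, c with
  | 1, 2, 2 => 1%Z
  | 2, 1, 2 => (-1)%Z
  | 1, 3, 3 => (-1)%Z
  | 3, 1, 3 => 1%Z
  | 2, 3, 0 => 1%Z
  | 3, 2, 0 => 1%Z
  | _, _, _ => 0%Z
  end.

Definition gl11_br (a b c : 'I_4) : algC := (gl11_brZ a b c)%:~R.

(* Basis tensors of L^{(x) n}: functions 'I_n -> 'I_4. *)
Definition tidx (n : nat) := {ffun 'I_n -> 'I_4}.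

(* The space L^{(x) n}, coordinates w.r.t. the basis tensors. *)
Definition tensor (n : nat) := {ffun tidx n -> algC^o}.

Definition tupd n (t : tidx n) (k : 'I_n) (c : 'I_4) : tidx n :=
  [ffun j => if j == k then c else t j].

Definition ksign n (a : 'I_4) (t : tidx n) (k : 'I_n) : algC :=
  (-1) ^+ (gl11_odd a && odd (\sum_(j < n | (j < k)%N) gl11_odd (t j))).

(* Coefficient of basis tensor s in e_a . e_t (super Leibniz rule,
   adjoint action on each factor). *)
Definition actB n (a : 'I_4) (t s : tidx n) : algC :=
  \sum_(k < n) \sum_(c < 4)
     ksign a t k * gl11_br a (t k) c * (s == tupd t k c)%:R.

(* Action of g = \sum_a g a * e_a in gl(1|1) on v in L^{(x) n}. *)
Definition act n (g : {ffun 'I_4 -> algC}) (v : tensor n) : tensor n :=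
  [ffun s => \sum_(a < 4) g a * \sum_(t : tidx n) v t * actB a t s].

From HB Require Import structures.
From mathcomp Require Import all_boot all_order all_algebra algC.
From mathcomp Require Import ring.
Set Implicit Arguments. Unset Strict Implicit. Unset Printing Implicit Defensive.
Import Order.TTheory GRing.Theory Num.Theory.
Local Open Scope ring_scope.

(* Write v in L^(m+1) as sum_c v_c (x) e_c.  The invariance equations in the
   last factor express v_G, v_Q+, v_Q- through v_H and force G v_H = 0;
   conversely every v_H of G-weight 0 extends by these formulas to an
   invariant, because the action of L on L^m is a representation
   (H acts by 0, Q+^2 = Q-^2 = 0, Q+Q- = -Q-Q+, [G,Q+-] = +-Q+-).  So
   Inv(L^(m+1)) is isomorphic to the G-weight-0 subspace of L^m, spanned by
   the basis tensors of total weight 0.  Encoding H, G, Q+, Q- as the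
   subsets {0}, {1}, {0,1}, {} of a 2-element set, m + weight is the size of
   the encoded subset of 'I_m * bool, so these are counted by C(2m, m). *)

Definition odd_deg n (t : tidx n) : nat := \sum_(j < n) gl11_odd (t j).

Definition ksign_all n a (t : tidx n) : algC := (-1) ^+ (gl11_odd a && odd (odd_deg t)).

Section LastFactor.
Variable m : nat.

Definition snoc (t : tidx m) (c : 'I_4) : tidx m.+1 :=
  [ffun j => if unlift ord_max j is Some j' then t j' else c].
Definition init (s : tidx m.+1) : tidx m := [ffun j => s (lift ord_max j)].

Lemma snoc_lift t c j : snoc t c (lift ord_max j) = t j.
Proof. by rewrite ffunE liftK. Qed.

Lemma snoc_max t c : snoc t c ord_max = c.
Proof. by rewrite ffunE unlift_none. Qed.

Lemma init_snoc t c : init (snoc t c) = t.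
Proof. by apply/ffunP=> j; rewrite ffunE snoc_lift. Qed.

Lemma snoc_init s : snoc (init s) (s ord_max) = s.
Proof. by apply/ffunP=> j; rewrite ffunE; case: unliftP => [j' ->|->]; rewrite ?ffunE. Qed.

Lemma snoc_eq u c t d : (snoc u c == snoc t d) = (u == t) && (c == d).
Proof.
apply/idP/andP=> [/eqP E|[/eqP-> /eqP->] //].
split; apply/eqP; first by rewrite -(init_snoc u c) E init_snoc.
by rewrite -(snoc_max u c) E snoc_max.
Qed.

Lemma widen_lift (k : 'I_m) : widen_ord (leqnSn m) k = lift ord_max k.
Proof. by apply: val_inj; rewrite /= /bump leqNgt ltn_ord. Qed.

Lemma sum_snoc (V : nmodType) (F : tidx m.+1 -> V) :
  \sum_s F s = \sum_t \sum_d F (snoc t d).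
Proof.
rewrite pair_big /= (reindex (fun p : tidx m * 'I_4 => snoc p.1 p.2)) //.
exists (fun s => (init s, s ord_max)) => [[t d] _|s _] /=.
  by rewrite init_snoc snoc_max.
by rewrite snoc_init.
Qed.

Lemma odd_deg_snoc t c : odd_deg (snoc t c) = (odd_deg t + gl11_odd c)%N.
Proof.
rewrite /odd_deg big_ord_recr /= snoc_max; congr (_ + _)%N.
by apply: eq_bigr => j _; rewrite widen_lift snoc_lift.
Qed.

Lemma ksign_lift a t d (k : 'I_m) :
  ksign a (snoc t d) (lift ord_max k) = ksign a t k.
Proof.
rewrite /ksign big_mkcond big_ord_recr /=.
have -> : bump m k = k by rewrite /bump leqNgt ltn_ord.
rewrite ltnNge (ltnW (ltn_ord k)) addn0 -big_mkcond /=.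
congr (_ ^+ (_ && odd _)); apply: eq_bigr => j _.
by rewrite widen_lift snoc_lift.
Qed.

Lemma ksign_max a t d : ksign a (snoc t d) ord_max = ksign_all a t.
Proof.
rewrite /ksign /ksign_all big_mkcond big_ord_recr /= ltnn addn0 /odd_deg.
congr (_ ^+ (_ && odd _)); apply: eq_bigr => j _.
by rewrite widen_lift snoc_lift /= ltn_ord.
Qed.

Lemma tupd_lift t d (k : 'I_m) e :
  tupd (snoc t d) (lift ord_max k) e = snoc (tupd t k e) d.
Proof.
apply/ffunP=> j; rewrite !ffunE; case: unliftP => [j' ->|->].
  by rewrite ffunE (inj_eq (@lift_inj _ _)).
by rewrite (negbTE (neq_lift _ _)).
Qed.

Lemma tupd_max t d e : tupd (snoc t d) ord_max e = snoc t e.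
Proof.
apply/ffunP=> j; rewrite !ffunE; case: unliftP => [j' ->|->].
  by rewrite eq_sym (negbTE (neq_lift _ _)).
by rewrite eqxx.
Qed.

(* Super Leibniz rule for the splitting L^(m+1) = L^m (x) L. *)
Lemma actB_snoc a t d u c :
  actB a (snoc t d) (snoc u c) =
  (c == d)%:R * actB a t u + (u == t)%:R * ksign_all a t * gl11_br a d c.
Proof.
rewrite /actB big_ord_recr /= mulr_sumr; congr (_ + _).
  apply: eq_bigr => k _; rewrite mulr_sumr; apply: eq_bigr => e _.
  rewrite widen_lift ksign_lift snoc_lift tupd_lift snoc_eq.
  by case: (c == d); rewrite ?mul0r ?mul1r ?andbT ?andbF ?mulr0.
rewrite ksign_max snoc_max (bigD1 c) //= big1 ?addr0.
  rewrite tupd_max snoc_eq eqxx andbT.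
  by case: (u == t); rewrite ?mulr1 ?mulr0 ?mul1r ?mul0r.
by move=> e ne; rewrite tupd_max snoc_eq (eq_sym c e) (negbTE ne) andbF mulr0.
Qed.

End LastFactor.

Definition eact n a (v : tensor n) : tensor n :=
  [ffun s => \sum_t v t * actB a t s].

Definition parity n (v : tensor n) : tensor n :=
  [ffun u => (-1) ^+ odd (odd_deg u) * v u].
Definition sparity n (a : 'I_4) (x : tensor n) := if gl11_odd a then parity x else x.

Definition component m c (v : tensor m.+1) : tensor m := [ffun u => v (snoc u c)].

Definition glue m (f : 'I_4 -> tensor m) : tensor m.+1 :=
  [ffun s : tidx m.+1 => f (s ord_max) (init s)].

Lemma eact_is_linear n a : linear (@eact n a).
Proof.
move=> k x y; apply/ffunP=> s; rewrite !ffunE scaler_sumr -big_split /=.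
by apply: eq_bigr => t _; rewrite !ffunE mulrDl -mulrA.
Qed.
HB.instance Definition _ n a :=
  GRing.isSemilinear.Build algC (tensor n) (tensor n) _ (@eact n a)
    (GRing.semilinear_linear (@eact_is_linear n a)).

Lemma parity_is_linear n : linear (@parity n).
Proof. by move=> k x y; apply/ffunP=> s; rewrite !ffunE mulrDr mulrCA. Qed.
HB.instance Definition _ n :=
  GRing.isSemilinear.Build algC (tensor n) (tensor n) _ (@parity n)
    (GRing.semilinear_linear (@parity_is_linear n)).

Lemma sparity_is_linear n a : linear (@sparity n a).
Proof. by move=> k x y; rewrite /sparity; case: (gl11_odd a); rewrite ?linearP. Qed.
HB.instance Definition _ n a :=
  GRing.isSemilinear.Build algC (tensor n) (tensor n) _ (@sparity n a)
    (GRing.semilinear_linear (@sparity_is_linear n a)).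

Lemma component_is_linear m c : linear (@component m c).
Proof. by move=> k x y; apply/ffunP=> s; rewrite !ffunE. Qed.
HB.instance Definition _ m c :=
  GRing.isSemilinear.Build algC (tensor m.+1) (tensor m) _ (@component m c)
    (GRing.semilinear_linear (@component_is_linear m c)).

Lemma parityK n : involutive (@parity n).
Proof.
by move=> x; apply/ffunP=> u; rewrite !ffunE mulrA -signr_addb addbb expr0 mul1r.
Qed.

Lemma sparity_parity n a (x : tensor n) : sparity a (parity x) = parity (sparity a x).
Proof. by rewrite /sparity; case: (gl11_odd a). Qed.

Lemma sparityC n a b (x : tensor n) : sparity a (sparity b x) = sparity b (sparity a x).
Proof. by rewrite /sparity; case: (gl11_odd a); case: (gl11_odd b). Qed.

Lemma component_glue m (f : 'I_4 -> tensor m) c : component c (glue f) = f c.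
Proof. by apply/ffunP=> u; rewrite ffunE /glue ffunE snoc_max init_snoc. Qed.

Lemma component_inj m (v w : tensor m.+1) :
  (forall c, component c v = component c w) -> v = w.
Proof.
move=> E; apply/ffunP=> s; rewrite -(snoc_init s).
by have /ffunP/(_ (init s)) := E (s ord_max); rewrite !ffunE.
Qed.

Lemma component_parity m c (v : tensor m.+1) :
  component c (parity v) = (-1) ^+ gl11_odd c *: parity (component c v).
Proof.
apply/ffunP=> u; rewrite !ffunE odd_deg_snoc oddD signr_addb oddb.
by rewrite -mulrA mulrCA.
Qed.

Lemma component_eact m a (v : tensor m.+1) c :
  component c (eact a v) =
  eact a (component c v) + \sum_d gl11_br a d c *: sparity a (component d v).
Proof.
apply/ffunP=> u; rewrite !ffunE sum_snoc sum_ffunE.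
transitivity (\sum_t v (snoc t c) * actB a t u +
              \sum_d gl11_br a d c * (ksign_all a u * v (snoc u d))).
  under eq_bigr do under eq_bigr do rewrite actB_snoc mulrDr.
  under eq_bigr do rewrite big_split /=.
  rewrite big_split /=; congr (_ + _).
    apply: eq_bigr => t _; rewrite (bigD1 c) //= eqxx mul1r big1 ?addr0 //.
    by move=> d; rewrite eq_sym => /negbTE ->; rewrite mul0r mulr0.
  rewrite exchange_big; apply: eq_bigr => d _ /=.
  rewrite (bigD1 u) //= eqxx big1 ?addr0; first by rewrite mul1r; ring.
  by move=> t; rewrite eq_sym => /negbTE ->; rewrite !mul0r mulr0.
congr (_ + _); first by apply: eq_bigr => t _; rewrite ffunE.
apply: eq_bigr => d _; rewrite !ffunE /sparity /ksign_all.
by case: (gl11_odd a); rewrite ?ffunE //= expr0 mul1r.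
Qed.

Lemma eact_nil a (v : tensor 0) : eact a v = 0.
Proof.
by apply/ffunP=> s; rewrite !ffunE big1 // => t _; rewrite /actB big_ord0 mulr0.
Qed.

Lemma gl11_brZ_parity (a b c : 'I_4) :
  (gl11_brZ a b c == 0) || (gl11_odd c == gl11_odd a (+) gl11_odd b).
Proof.
by case: a => [[|[|[|[|a]]]] Ha] //; case: b => [[|[|[|[|b]]]] Hb] //;
   case: c => [[|[|[|[|c]]]] Hc].
Qed.

Lemma gl11_br_sign (a e c : 'I_4) :
  (-1) ^+ gl11_odd c * gl11_br a e c =
  (-1) ^+ gl11_odd a * ((-1) ^+ gl11_odd e * gl11_br a e c).
Proof.
case/orP: (gl11_brZ_parity a e c) => [/eqP E|/eqP ->].
  by rewrite /gl11_br E !mulr0.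
by rewrite signr_addb mulrA.
Qed.

Lemma gl11_br_sparity n (a b f : 'I_4) (x : tensor n) :
  gl11_br a b f *: sparity f x = gl11_br a b f *: sparity a (sparity b x).
Proof.
case/orP: (gl11_brZ_parity a b f) => [/eqP E|/eqP E].
  by rewrite /gl11_br E !scale0r.
by rewrite /sparity E; case: (gl11_odd a); case: (gl11_odd b); rewrite //= parityK.
Qed.

(* The super Jacobi identity, in the form
   ad e_a ad e_b - (-1)^|a||b| ad e_b ad e_a = ad [e_a, e_b]. *)
Lemma gl11_jacobiZ (a b c e : 'I_4) :
  \sum_(d < 4) (gl11_brZ a d c * gl11_brZ b e d -
          (-1) ^+ (gl11_odd a && gl11_odd b) * (gl11_brZ b d c * gl11_brZ a e d)) =
  \sum_(f < 4) gl11_brZ a b f * gl11_brZ f e c.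
Proof.
rewrite !big_ord_recl !big_ord0.
by case: a => [[|[|[|[|a]]]] Ha] //; case: b => [[|[|[|[|b]]]] Hb] //;
   case: c => [[|[|[|[|c]]]] Hc] //; case: e => [[|[|[|[|e]]]] He].
Qed.

Lemma gl11_jacobi (a b c e : 'I_4) :
  \sum_d gl11_br a d c * gl11_br b e d -
  (-1) ^+ (gl11_odd a && gl11_odd b) * \sum_d gl11_br b d c * gl11_br a e d =
  \sum_f gl11_br a b f * gl11_br f e c.
Proof.
rewrite mulr_sumr -sumrB.
have -> : \sum_f gl11_br a b f * gl11_br f e c =
          (\sum_(f < 4) gl11_brZ a b f * gl11_brZ f e c)%:~R.
  by rewrite rmorph_sum; apply: eq_bigr => f _; rewrite rmorphM.
rewrite -gl11_jacobiZ rmorph_sum; apply: eq_bigr => d _ /=.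
by rewrite intrB !intrM intr_sign.
Qed.

Lemma parity_eact n a (v : tensor n) :
  parity (eact a v) = (-1) ^+ gl11_odd a *: eact a (parity v).
Proof.
elim: n v => [|m IH] v; first by rewrite !eact_nil linear0 scaler0.
apply: component_inj => c.
rewrite component_parity component_eact linearZ /= component_eact component_parity.
rewrite linearD linear_sum /= IH.
under [in RHS]eq_bigr do rewrite component_parity.
rewrite linearZ /= !scalerDr scalerA mulrC -scalerA; congr (_ + _).
rewrite !scaler_sumr; apply: eq_bigr => d _.
rewrite !linearZ /= sparity_parity !scalerA; congr (_ *: _).
by rewrite [LHS]mulrC gl11_br_sign; ring.
Qed.

Lemma sparity_eact n a b (x : tensor n) :
  sparity a (eact b x) = (-1) ^+ (gl11_odd a && gl11_odd b) *: eact b (sparity a x).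
Proof. by rewrite /sparity; case: (gl11_odd a); rewrite ?parity_eact //= expr0 scale1r. Qed.

Lemma component_eact2 m a b c (v : tensor m.+1) :
  component c (eact a (eact b v)) =
  eact a (eact b (component c v)) +
  \sum_e gl11_br b e c *: eact a (sparity b (component e v)) +
  (-1) ^+ (gl11_odd a && gl11_odd b) *:
    \sum_d gl11_br a d c *: eact b (sparity a (component d v)) +
  \sum_e (\sum_d gl11_br a d c * gl11_br b e d) *:
    sparity a (sparity b (component e v)).
Proof.
rewrite component_eact component_eact linearD linear_sum /= -!addrA; congr (_ + _).
under eq_bigr do rewrite linearZ /=.
congr (_ + _).
under eq_bigr do rewrite component_eact linearD linear_sum /= scalerDr.
rewrite big_split /=; congr (_ + _).
  rewrite scaler_sumr; apply: eq_bigr => d _.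
  by rewrite sparity_eact !scalerA mulrC.
under eq_bigr do rewrite scaler_sumr.
rewrite exchange_big /=; apply: eq_bigr => e _.
rewrite scaler_suml; apply: eq_bigr => d _.
by rewrite linearZ /= scalerA.
Qed.

Lemma sign_supercomm_cancel m (b : bool) (A1 A2 T1 T4 S1 S2 : tensor m) :
  let e := (-1) ^+ b : algC in
  (A1 + T1 + e *: T4 + S1) - e *: (A2 + T4 + e *: T1 + S2) =
  (A1 - e *: A2) + (S1 - e *: S2).
Proof.
apply/ffunP => u; rewrite !ffunE.
by case: b; rewrite /GRing.scale /= ?expr1 ?expr0; ring.
Qed.

(* Induction on the number of factors; in the last factor this is the super
   Jacobi identity. *)
Lemma eact_supercomm n a b (v : tensor n) :
  eact a (eact b v) - (-1) ^+ (gl11_odd a && gl11_odd b) *: eact b (eact a v) =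
  \sum_f gl11_br a b f *: eact f v.
Proof.
elim: n v => [|m IH] v.
  by rewrite !eact_nil scaler0 subr0 big1 // => f _; rewrite eact_nil scaler0.
apply: component_inj => c.
rewrite linearB linearZ linear_sum /= !component_eact2.
under [RHS]eq_bigr do rewrite linearZ /= component_eact scalerDr.
rewrite big_split /= (andbC (gl11_odd b)) sign_supercomm_cancel; congr (_ + _).
  exact: IH.
rewrite scaler_sumr -sumrB.
under [RHS]eq_bigr do rewrite scaler_sumr.
rewrite exchange_big /=; apply: eq_bigr => e _.
rewrite sparityC scalerA -scalerBl gl11_jacobi scaler_suml.
apply: eq_bigr => f _.
by rewrite [RHS]scalerA [in RHS]mulrC -[RHS]scalerA gl11_br_sparity scalerA mulrC sparityC.
Qed.

Definition eH : 'I_4 := @Ordinal 4 0 isT.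
Definition eG : 'I_4 := @Ordinal 4 1 isT.
Definition eQp : 'I_4 := @Ordinal 4 2 isT.
Definition eQm : 'I_4 := @Ordinal 4 3 isT.

Lemma gl11_basisP (c : 'I_4) : [\/ c = eH, c = eG, c = eQp | c = eQm].
Proof.
case: c => [[|[|[|[|c]]]] Hc] //.
- by apply: Or41; apply: val_inj.
- by apply: Or42; apply: val_inj.
- by apply: Or43; apply: val_inj.
- by apply: Or44; apply: val_inj.
Qed.

Lemma sum_gl11 (V : nmodType) (F : 'I_4 -> V) :
  \sum_d F d = F eH + F eG + F eQp + F eQm.
Proof. by rewrite !big_ord_recl big_ord0 addr0 !addrA; repeat f_equal; apply: val_inj. Qed.

Definition brE := (mulr0z, mulr1z, mulrN1z, scale0r, scale1r, scaleN1r, scaler0, addr0, add0r).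

Section Components.
Variables (m : nat) (w : tensor m.+1).

Lemma componentH_G : component eH (eact eG w) = eact eG (component eH w).
Proof. by rewrite component_eact sum_gl11 /sparity /gl11_br /= ?brE. Qed.
Lemma componentG_G : component eG (eact eG w) = eact eG (component eG w).
Proof. by rewrite component_eact sum_gl11 /sparity /gl11_br /= ?brE. Qed.
Lemma componentQp_G :
  component eQp (eact eG w) = eact eG (component eQp w) + component eQp w.
Proof. by rewrite component_eact sum_gl11 /sparity /gl11_br /= ?brE. Qed.
Lemma componentQm_G :
  component eQm (eact eG w) = eact eG (component eQm w) - component eQm w.
Proof. by rewrite component_eact sum_gl11 /sparity /gl11_br /= ?brE. Qed.

Lemma componentH_Qp :
  component eH (eact eQp w) = eact eQp (component eH w) + parity (component eQm w).
Proof. by rewrite component_eact sum_gl11 /sparity /gl11_br /= ?brE. Qed.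
Lemma componentG_Qp : component eG (eact eQp w) = eact eQp (component eG w).
Proof. by rewrite component_eact sum_gl11 /sparity /gl11_br /= ?brE. Qed.
Lemma componentQp_Qp :
  component eQp (eact eQp w) = eact eQp (component eQp w) - parity (component eG w).
Proof. by rewrite component_eact sum_gl11 /sparity /gl11_br /= ?brE. Qed.
Lemma componentQm_Qp : component eQm (eact eQp w) = eact eQp (component eQm w).
Proof. by rewrite component_eact sum_gl11 /sparity /gl11_br /= ?brE. Qed.

Lemma componentH_Qm :
  component eH (eact eQm w) = eact eQm (component eH w) + parity (component eQp w).
Proof. by rewrite component_eact sum_gl11 /sparity /gl11_br /= ?brE. Qed.
Lemma componentG_Qm : component eG (eact eQm w) = eact eQm (component eG w).
Proof. by rewrite component_eact sum_gl11 /sparity /gl11_br /= ?brE. Qed.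
Lemma componentQp_Qm : component eQp (eact eQm w) = eact eQm (component eQp w).
Proof. by rewrite component_eact sum_gl11 /sparity /gl11_br /= ?brE. Qed.
Lemma componentQm_Qm :
  component eQm (eact eQm w) = eact eQm (component eQm w) + parity (component eG w).
Proof. by rewrite component_eact sum_gl11 /sparity /gl11_br /= ?brE. Qed.

End Components.

Definition component_G := (componentH_G, componentG_G, componentQp_G, componentQm_G).
Definition component_Qp := (componentH_Qp, componentG_Qp, componentQp_Qp, componentQm_Qp).
Definition component_Qm := (componentH_Qm, componentG_Qm, componentQp_Qm, componentQm_Qm).

Section Relations.
Variables (n : nat) (v : tensor n).

Lemma eact_H : eact eH v = 0.
Proof.
apply/ffunP=> s; rewrite !ffunE big1 // => t _.
rewrite /actB big1 ?mulr0 // => k _; rewrite big1 // => c _.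
by rewrite /gl11_br /= mulr0 mul0r.
Qed.

Lemma addrr_eq0 (x : tensor n) : x + x = 0 -> x = 0.
Proof.
move=> /ffunP E; apply/ffunP=> u; move: (E u); rewrite !ffunE -mulr2n => /eqP.
by rewrite mulrn_eq0 => /eqP.
Qed.

Lemma eact_Qp2 : eact eQp (eact eQp v) = 0.
Proof.
apply: addrr_eq0; have := eact_supercomm eQp eQp v.
by rewrite sum_gl11 /gl11_br /= ?brE ?expr1 ?scaleN1r ?opprK.
Qed.

Lemma eact_Qm2 : eact eQm (eact eQm v) = 0.
Proof.
apply: addrr_eq0; have := eact_supercomm eQm eQm v.
by rewrite sum_gl11 /gl11_br /= ?brE ?expr1 ?scaleN1r ?opprK.
Qed.

Lemma eact_QpQm : eact eQp (eact eQm v) = - eact eQm (eact eQp v).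
Proof.
have := eact_supercomm eQp eQm v; rewrite sum_gl11 /gl11_br /= eact_H ?brE.
by rewrite ?expr1 ?scaleN1r ?opprK => /eqP; rewrite addr_eq0 => /eqP.
Qed.

Lemma eact_GQp : eact eG (eact eQp v) = eact eQp (eact eG v) + eact eQp v.
Proof.
have := eact_supercomm eG eQp v; rewrite sum_gl11 /gl11_br /= ?brE.
by rewrite ?expr0 ?scale1r => /eqP; rewrite subr_eq => /eqP ->; rewrite addrC.
Qed.

Lemma eact_GQm : eact eG (eact eQm v) = eact eQm (eact eG v) - eact eQm v.
Proof.
have := eact_supercomm eG eQm v; rewrite sum_gl11 /gl11_br /= ?brE.
by rewrite ?expr0 ?scale1r => /eqP; rewrite subr_eq => /eqP ->; rewrite addrC.
Qed.

Lemma eact_Qp_parity : eact eQp (parity v) = - parity (eact eQp v).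
Proof. by rewrite parity_eact /= expr1 scaleN1r opprK. Qed.

Lemma eact_Qm_parity : eact eQm (parity v) = - parity (eact eQm v).
Proof. by rewrite parity_eact /= expr1 scaleN1r opprK. Qed.

Lemma eact_G_parity : eact eG (parity v) = parity (eact eG v).
Proof. by rewrite parity_eact /= expr0 scale1r. Qed.

End Relations.

(* The ad G-eigenvalue of a basis tensor; H, G, Q+, Q- have weights 0, 0, 1, -1. *)
Definition weight n (u : tidx n) : int := \sum_(j < n) gl11_brZ 1 (u j) (u j).

Lemma weight_snoc m (u : tidx m) c : weight (snoc u c) = weight u + gl11_brZ 1 c c.
Proof.
rewrite /weight big_ord_recr /= snoc_max; congr (_ + _).
by apply: eq_bigr => j _; rewrite widen_lift snoc_lift.
Qed.

Lemma eact_G_weight n (v : tensor n) : eact eG v = [ffun u => (weight u)%:~R * v u].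
Proof.
elim: n v => [|m IH] v.
  by rewrite eact_nil; apply/ffunP=> u; rewrite !ffunE /weight big_ord0 mul0r.
apply: component_inj => c; case: (gl11_basisP c) => ->; rewrite ?component_G IH;
  apply/ffunP=> u; rewrite !ffunE weight_snoc intrD /= ?brE; ring.
Qed.

Lemma eact_G_eq0 n (v : tensor n) :
  eact eG v = 0 <-> forall u, weight u != 0 -> v u = 0.
Proof.
rewrite eact_G_weight; split=> [/ffunP E u nz|vw0].
  by have /eqP := E u; rewrite !ffunE mulf_eq0 intr_eq0 (negbTE nz) => /eqP.
apply/ffunP=> u; rewrite !ffunE.
by case: (eqVneq (weight u) 0) => [->|/vw0 ->]; rewrite ?mul0r ?mulr0.
Qed.

(* The components forced on an invariant with H-component x (see invariant_inv_ext). *)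
Definition inv_ext m (x : tensor m) : tensor m.+1 :=
  glue (fun c => if val c == 0%N then x
                 else if val c == 1%N then eact eQp (eact eQm x)
                 else if val c == 2%N then - parity (eact eQm x)
                 else - parity (eact eQp x)).

Section InvariantExtension.
Variables (m : nat) (x : tensor m).

Lemma inv_extH : component eH (inv_ext x) = x.
Proof. by rewrite component_glue. Qed.
Lemma inv_extG : component eG (inv_ext x) = eact eQp (eact eQm x).
Proof. by rewrite component_glue. Qed.
Lemma inv_extQp : component eQp (inv_ext x) = - parity (eact eQm x).
Proof. by rewrite component_glue. Qed.
Lemma inv_extQm : component eQm (inv_ext x) = - parity (eact eQp x).
Proof. by rewrite component_glue. Qed.

End InvariantExtension.

Definition inv_extE := (inv_extH, inv_extG, inv_extQp, inv_extQm).

Lemma inv_ext_is_linear m : linear (@inv_ext m).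
Proof.
move=> k x y; apply: component_inj => c; rewrite linearP /=.
by case: (gl11_basisP c) => ->; rewrite !inv_extE // !linearD !linearZ /= ?opprD ?scalerN.
Qed.
HB.instance Definition _ m :=
  GRing.isSemilinear.Build algC (tensor m) (tensor m.+1) _ (@inv_ext m)
    (GRing.semilinear_linear (@inv_ext_is_linear m)).

Lemma inv_ext_invariant m (x : tensor m) :
  eact eG x = 0 -> forall a, eact a (inv_ext x) = 0.
Proof.
move=> Gx a; case: (gl11_basisP a) => ->; first exact: eact_H.
- apply: component_inj => c; rewrite linear0.
  case: (gl11_basisP c) => ->; rewrite !component_G !inv_extE //.
  + by rewrite eact_GQp eact_GQm Gx !linear0 sub0r linearN addNr.
  + by rewrite linearN /= eact_G_parity eact_GQm Gx linear0 sub0r linearN opprK addrN.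
  + by rewrite linearN /= eact_G_parity eact_GQp Gx linear0 add0r opprK addNr.
- apply: component_inj => c; rewrite linear0.
  case: (gl11_basisP c) => ->; rewrite !component_Qp !inv_extE.
  + by rewrite linearN /= parityK subrr.
  + by rewrite eact_Qp2.
  + by rewrite linearN /= eact_Qp_parity opprK addrN.
  + by rewrite linearN /= eact_Qp_parity eact_Qp2 opprK linear0.
- apply: component_inj => c; rewrite linear0.
  case: (gl11_basisP c) => ->; rewrite !component_Qm !inv_extE.
  + by rewrite linearN /= parityK subrr.
  + by rewrite eact_QpQm linearN /= eact_Qm2 oppr0.
  + by rewrite linearN /= eact_Qm_parity eact_Qm2 opprK linear0.
  + by rewrite linearN /= eact_Qm_parity opprK eact_QpQm linearN /= subrr.
Qed.

Lemma invariant_inv_ext m (v : tensor m.+1) : (forall a, eact a v = 0) ->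
  eact eG (component eH v) = 0 /\ v = inv_ext (component eH v).
Proof.
move=> inv_v; have comp0 a c : component c (eact a v) = 0 by rewrite inv_v linear0.
split; first by rewrite -componentH_G comp0.
have vQm : component eQm v = - parity (eact eQp (component eH v)).
  have /eqP := comp0 eQp eH; rewrite componentH_Qp addr_eq0 => /eqP ->.
  by rewrite linearN /= parityK opprK.
have vQp : component eQp v = - parity (eact eQm (component eH v)).
  have /eqP := comp0 eQm eH; rewrite componentH_Qm addr_eq0 => /eqP ->.
  by rewrite linearN /= parityK opprK.
have vG : component eG v = eact eQp (eact eQm (component eH v)).
  have /eqP := comp0 eQp eQp; rewrite componentQp_Qp subr_eq0 => /eqP E.
  by rewrite -[component eG v]parityK -E vQp linearN /= eact_Qp_parity opprK parityK.
by apply: component_inj => c; case: (gl11_basisP c) => ->; rewrite inv_extE.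
Qed.

Lemma act_eq0_eact n (v : tensor n) :
  (forall g, act g v = 0) <-> (forall a, eact a v = 0).
Proof.
have actE g : act g v = \sum_a g a *: eact a v.
  by apply/ffunP=> s; rewrite !ffunE sum_ffunE; apply: eq_bigr => a _; rewrite !ffunE.
split=> [inv_v a|inv_v g]; last by rewrite actE big1 // => a _; rewrite inv_v scaler0.
have := inv_v [ffun b => (b == a)%:R]; rewrite actE (bigD1 a) //= big1 ?addr0.
  by rewrite ffunE eqxx scale1r.
by move=> b nb; rewrite ffunE (negbTE nb) scale0r.
Qed.

Section WeightZero.
Variable m : nat.

Definition weight0 := [pred t : tidx m | weight t == 0].

Definition basis_tensor (t : tidx m) : tensor m := [ffun u => (u == t)%:R].

Lemma eact_G_basis_tensor t : weight t = 0 -> eact eG (basis_tensor t) = 0.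
Proof.
move=> w0; apply/eact_G_eq0 => u nz; rewrite ffunE.
by case: eqP => // ut; move: nz; rewrite ut w0.
Qed.

Lemma eact_G_eq0_expand (x : tensor m) :
  eact eG x = 0 -> x = \sum_(t <- enum weight0) x t *: basis_tensor t.
Proof.
move/eact_G_eq0=> xw0; apply/ffunP=> u; rewrite sum_ffunE big_enum /=.
have xt_coord t : (x t *: basis_tensor t) u = x t * (u == t)%:R by rewrite !ffunE.
under eq_bigr do rewrite xt_coord.
case: (eqVneq (weight u) 0) => [w0|nz].
  rewrite (bigD1 u) ?inE ?w0 //= eqxx mulr1 big1 ?addr0 // => t /andP[_ tu].
  by rewrite eq_sym (negbTE tu) mulr0.
rewrite xw0 // big1 // => t; rewrite inE => /eqP w0.
by case: eqP => [ut|_]; rewrite ?mulr0 //; move: nz; rewrite ut w0.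
Qed.

End WeightZero.

(* Each factor is encoded by a subset of bool: H = {false}, G = {true},
   Q+ = {false, true}, Q- = {}, so that its weight is the size of the subset minus 1. *)
Definition factor_bit (c : 'I_4) (b : bool) : bool :=
  if b then (val c == 1%N) || (val c == 2%N) else (val c == 0%N) || (val c == 2%N).
Definition factor_of_bits (b1 b2 : bool) : 'I_4 :=
  if b1 then (if b2 then eQp else eH) else (if b2 then eG else eQm).

Section Counting.
Variable m : nat.

Definition bits_of (t : tidx m) : {set 'I_m * bool} := [set p | factor_bit (t p.1) p.2].
Definition of_bits (B : {set 'I_m * bool}) : tidx m :=
  [ffun j => factor_of_bits ((j, false) \in B) ((j, true) \in B)].

Lemma bits_ofK : cancel bits_of of_bits.
Proof.
move=> t; apply/ffunP=> j; rewrite ffunE !inE /=.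
by case: (gl11_basisP (t j)) => ->.
Qed.

Lemma of_bitsK : cancel of_bits bits_of.
Proof.
move=> B; apply/setP=> -[j b]; rewrite inE ffunE /=.
by case: b; case: ((j, false) \in B); case: ((j, true) \in B).
Qed.

Lemma card_bits_of t : #|bits_of t|%:Z = m%:Z + weight t.
Proof.
rewrite cardsE -sum1_card big_mkcond /=.
rewrite -(pair_big xpredT xpredT (fun j b => if factor_bit (t j) b then 1%N else 0%N)) /=.
rewrite (big_morph Posz PoszD (erefl _)) /weight.
have -> : m%:Z = \sum_(j < m) (1 : int) by rewrite sumr_const card_ord natz.
rewrite -big_split /=; apply: eq_bigr => j _.
by rewrite big_bool /=; case: (gl11_basisP (t j)) => ->.
Qed.

Lemma card_weight0 : #|weight0 m| = 'C(m * 2, m).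
Proof.
have <- : #|{: 'I_m * bool}| = (m * 2)%N by rewrite card_prod card_ord card_bool.
rewrite -card_draws -cardsE -(card_imset _ (can_inj bits_ofK)).
congr #|pred_of_set _|; apply/setP=> B; rewrite !inE.
apply/imsetP/idP => [[t]|cardB].
  rewrite inE => /eqP w0 ->; apply/eqP/eqP; rewrite -eqz_nat.
  by rewrite card_bits_of w0 addr0.
exists (of_bits B); rewrite ?of_bitsK // inE.
have := card_bits_of (of_bits B); rewrite of_bitsK (eqP cardB) => E.
by apply/eqP; apply: (@addrI _ m%:Z); rewrite addr0 -E.
Qed.

End Counting.

Definition inv_basis m : seq (tensor m.+1) :=
  [seq inv_ext (basis_tensor t) | t <- enum (weight0 m)].

Lemma inv_basis_invariant m v : v \in inv_basis m -> forall a, eact a v = 0.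
Proof.
case/mapP=> t; rewrite mem_enum inE => /eqP w0 ->.
by apply: inv_ext_invariant; apply: eact_G_basis_tensor.
Qed.

Lemma inv_ext_snocH m (x : tensor m) u : inv_ext x (snoc u eH) = x u.
Proof. by have /ffunP/(_ u) := inv_extH x; rewrite ffunE. Qed.

Lemma inv_basis_free m : free (inv_basis m).
Proof.
set T := enum (weight0 m); have t0 : tidx m := [ffun => eH].
have lt_size (i : 'I_(size (inv_basis m))) : (i < size T)%N.
  by rewrite -(size_map (fun t => inv_ext (basis_tensor t))) ltn_ord.
suff: free (in_tuple (inv_basis m)) by [].
apply/freeP=> k sum0 i.
have /ffunP/(_ (snoc (nth t0 T i) eH)) := sum0.
rewrite sum_ffunE ffunE (bigD1 i) //= big1 ?addr0.
  by rewrite !ffunE (nth_map t0) // inv_ext_snocH ffunE eqxx /GRing.scale /= mulr1.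
move=> j ji; rewrite !ffunE (nth_map t0) // inv_ext_snocH ffunE.
by rewrite nth_uniq ?enum_uniq // (inj_eq val_inj) eq_sym (negbTE ji) /GRing.scale /= mulr0.
Qed.

Lemma mem_inv_span m (v : tensor m.+1) :
  v \in <<inv_basis m>>%VS <-> (forall a, eact a v = 0).
Proof.
split=> [/(coord_span (X := in_tuple _)) -> a|].
  rewrite linear_sum big1 //= => i _.
  by rewrite linearZ /= inv_basis_invariant ?scaler0 // mem_nth.
move/invariant_inv_ext => [Gv0 ->]; rewrite (eact_G_eq0_expand Gv0).
rewrite linear_sum big_seq; apply: rpred_sum => t T_t.
by rewrite linearZ /=; apply/memvZ/memv_span/map_f.
Qed.

Lemma size_inv_basis m : size (inv_basis m) = 'C(m * 2, m).
Proof. by rewrite size_map -cardE card_weight0. Qed.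

Theorem proposition2p5 (n : nat) : (1 <= n)%N ->
  exists U : {vspace tensor n},
    (forall v : tensor n,
        v \in U <-> (forall g : {ffun 'I_4 -> algC}, act g v = 0)) /\
    \dim U = 'C(2 * n - 2, n - 1).
Proof.
case: n => [//|m] _; exists <<inv_basis m>>%VS; split.
  by move=> v; apply: iff_trans (mem_inv_span v) (iff_sym (act_eq0_eact v)).
rewrite (eqP (inv_basis_free m)) size_inv_basis subn1.
by rewrite [in RHS]mulnC mulSn addnC addnK.
Qed.
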